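(* The linear span of $\{h_k:k\geq2\}$ is dense in $H^2$ with respect to the compact-open topology: for every $f\in H^2$ there is a sequence $(p_j)$ in $\mathrm{span}\{h_k:k\ge2\}$ converging to $f$ uniformly on compact subsets of $\mathbb{D}$.
   Context: $\mathbb{D}$ is the open unit disk and $H^2$ the Hardy space on $\mathbb{D}$. For $k\geq 2$, $h_k(z)=\frac{1}{1-z}\big(\mathrm{Log}(1-z^k)-\mathrm{Log}(1-z)-\ln k\big)$ with $\mathrm{Log}$ the principal branch. *)

From Stdlib Require Import Reals.
Open Scope R_scope.

Definition Cplx : Type := (R * R)%type.
Definition RtoC (x : R) : Cplx := (x, 0).
Definition C0 : Cplx := (0, 0).
Definition C1 : Cplx := (1, 0).
Definition Cadd (z w : Cplx) : Cplx := (fst z + fst w, snd z + snd w).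
Definition Copp (z : Cplx) : Cplx := (- fst z, - snd z).
Definition Csub (z w : Cplx) : Cplx := Cadd z (Copp w).
Definition Cmul (z w : Cplx) : Cplx :=
  (fst z * fst w - snd z * snd w, fst z * snd w + snd z * fst w).
Definition Cinv (z : Cplx) : Cplx :=
  let d := fst z * fst z + snd z * snd z in (fst z / d, - snd z / d).
Definition Cdiv (z w : Cplx) : Cplx := Cmul z (Cinv w).
Definition Cnorm (z : Cplx) : R := sqrt (fst z * fst z + snd z * snd z).
Fixpoint Cpow (z : Cplx) (n : nat) : Cplx :=
  match n with O => C1 | S m => Cmul z (Cpow z m) end.
Fixpoint Csum (f : nat -> Cplx) (n : nat) : Cplx :=
  match n with O => f O | S m => Cadd (Csum f m) (f (S m)) end.

Definition Cseq_cv (u : nat -> Cplx) (l : Cplx) : Prop :=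
  forall eps : R, eps > 0 -> exists N : nat, forall n : nat, (n >= N)%nat ->
    Cnorm (Csub (u n) l) < eps.
Definition Cseries_cv (a : nat -> Cplx) (l : Cplx) : Prop := Cseq_cv (Csum a) l.

Definition in_disk (z : Cplx) : Prop := Cnorm z < 1.

(** Principal argument, with values in (-PI, PI] (Arg 0 := 0, irrelevant). *)
Definition Arg (z : Cplx) : R :=
  let x := fst z in let y := snd z in
  if Rlt_dec 0 x then atan (y / x)
  else if Rlt_dec x 0 then
    (if Rle_dec 0 y then atan (y / x) + PI else atan (y / x) - PI)
  else (if Rlt_dec 0 y then PI / 2 else if Rlt_dec y 0 then - (PI / 2) else 0).

Definition CLog (z : Cplx) : Cplx := (ln (Cnorm z), Arg z).

Definition h (k : nat) (z : Cplx) : Cplx :=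
  Cdiv (Csub (Csub (CLog (Csub C1 (Cpow z k))) (CLog (Csub C1 z))) (RtoC (ln (INR k))))
       (Csub C1 z).

Definition in_H2 (f : Cplx -> Cplx) : Prop :=
  exists a : nat -> Cplx,
    (exists s : R, infinite_sum (fun n => Rsqr (Cnorm (a n))) s) /\
    (forall z : Cplx, in_disk z -> Cseries_cv (fun n => Cmul (a n) (Cpow z n)) (f z)).

Definition seq_compact (K : Cplx -> Prop) : Prop :=
  forall u : nat -> Cplx, (forall n, K (u n)) ->
    exists phi : nat -> nat, (forall n, (phi n < phi (S n))%nat) /\
      exists l : Cplx, K l /\ Cseq_cv (fun n => u (phi n)) l.

Definition cv_compact_open (p : nat -> Cplx -> Cplx) (f : Cplx -> Cplx) : Prop :=
  forall K : Cplx -> Prop, (forall z, K z -> in_disk z) -> seq_compact K ->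
    forall eps : R, eps > 0 -> exists N : nat, forall j : nat, (j >= N)%nat ->
      forall z : Cplx, K z -> Cnorm (Csub (p j z) (f z)) < eps.

(* (1 - z) h_k(z) = Log(1 - z^k) - Log(1 - z) - ln k, and Log(1 - z^k) = O(r^k) uniformly on
   |z| <= r < 1.  So the uniform closure on that disk of the span of these numerators contains
   the constants (compare k and 2k), Log(1 - z) and every Log(1 - z^k), and it is stable under
   z |-> z^p.  Sieving -Log(1 - z) = sum_m z^m / m as Eratosthenes does (subtract 1/p times the
   series at z^p, for p = 2, 3, 5, ...) leaves z plus terms of arbitrarily high order; hence z,
   every z^m and every polynomial lie in the closure, and so does (1 - z) f for f in H^2, whose
   Taylor coefficients are bounded.  Dividing by 1 - z, with |1 - z| >= 1 - r, approximates f by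
   combinations of the h_k on |z| <= r; radii r_j -> 1 then handle every compact set. *)

From Stdlib Require Import Reals Lra Lia Psatz List Bool ZArith.
From Stdlib Require Import Classical ClassicalEpsilon.
From Coquelicot Require Import Hierarchy Derive AutoDerive.
From Coquelicot Require Complex.
Import ListNotations.
Open Scope R_scope.

Lemma pow_antimono_le_1 (x : R) (a b : nat) : 0 <= x <= 1 -> (a <= b)%nat -> x ^ b <= x ^ a.
Proof.
  intros Hx Hab; replace b with (a + (b - a))%nat by lia; rewrite pow_add.
  assert (0 <= x ^ a) by (apply pow_le; lra).
  assert (0 <= x ^ (b - a) <= 1)
    by (split; [apply pow_le | rewrite <- (pow1 (b - a)); apply pow_incr]; lra).
  nra.
Qed.

Lemma inv_INR_S_bounds n : 0 < / INR (S n) <= 1.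
Proof.
  assert (1 <= INR (S n)) by (apply (le_INR 1); lia).
  split; [apply Rinv_0_lt_compat | rewrite <- Rinv_1; apply Rinv_le_contravar]; lra.
Qed.

Lemma Cinv_Coquelicot (z : Cplx) : Cinv z = Complex.Cinv z.
Proof. destruct z as [x y]; unfold Cinv, Complex.Cinv; simpl; f_equal; f_equal; ring. Qed.

Lemma Cplx_field_theory :
  field_theory C0 C1 Cadd Cmul Csub Copp Cdiv Cinv (@eq Cplx).
Proof.
  destruct Complex.C_field_theory as [[] ? ? Finv_l].
  constructor; [constructor|..]; auto.
  intros p Hp; rewrite Cinv_Coquelicot; exact (Finv_l p Hp).
Qed.
Add Field Cplx_field : Cplx_field_theory.

Lemma Cnorm_Cmod (z : Cplx) : Cnorm z = Complex.Cmod z.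
Proof. unfold Cnorm, Complex.Cmod; f_equal; ring. Qed.

Lemma Cnorm_ge0 z : 0 <= Cnorm z.
Proof. apply sqrt_pos. Qed.

Lemma Cnorm_add z w : Cnorm (Cadd z w) <= Cnorm z + Cnorm w.
Proof. rewrite !Cnorm_Cmod; apply Complex.Cmod_triangle. Qed.

Lemma Cnorm_mul z w : Cnorm (Cmul z w) = Cnorm z * Cnorm w.
Proof. rewrite !Cnorm_Cmod; apply Complex.Cmod_mult. Qed.

Lemma Cnorm_opp z : Cnorm (Copp z) = Cnorm z.
Proof. rewrite !Cnorm_Cmod; apply Complex.Cmod_opp. Qed.

Lemma Cnorm_pow z n : Cnorm (Cpow z n) = Cnorm z ^ n.
Proof. rewrite !Cnorm_Cmod; apply Complex.Cmod_pow. Qed.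

Lemma Cnorm_RtoC x : Cnorm (RtoC x) = Rabs x.
Proof. rewrite Cnorm_Cmod; apply Complex.Cmod_R. Qed.

Lemma Cnorm_C0 : Cnorm C0 = 0.
Proof. rewrite Cnorm_Cmod; apply Complex.Cmod_0. Qed.

Lemma Cnorm_C1 : Cnorm C1 = 1.
Proof. rewrite Cnorm_Cmod; apply Complex.Cmod_1. Qed.

Lemma Cnorm_inv z : z <> C0 -> Cnorm (Cinv z) = / Cnorm z.
Proof. intro Hz; rewrite Cinv_Coquelicot, !Cnorm_Cmod; now apply Complex.Cmod_inv. Qed.

Lemma Cnorm_sub z w : Cnorm (Csub z w) <= Cnorm z + Cnorm w.
Proof. unfold Csub; rewrite <- (Cnorm_opp w); apply Cnorm_add. Qed.

Lemma Cnorm_sub_sym z w : Cnorm (Csub z w) = Cnorm (Csub w z).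
Proof. rewrite <- Cnorm_opp; f_equal; ring. Qed.

Lemma Cnorm_sub_triangle a b c : Cnorm (Csub a c) <= Cnorm (Csub a b) + Cnorm (Csub b c).
Proof. replace (Csub a c) with (Cadd (Csub a b) (Csub b c)) by ring; apply Cnorm_add. Qed.

Lemma Cnorm_sub_ge z w : Cnorm z - Cnorm w <= Cnorm (Csub z w).
Proof.
  pose proof (Cnorm_add (Csub z w) w) as H.
  replace (Cadd (Csub z w) w) with z in H by ring; lra.
Qed.

Lemma Cnorm_1_sub_ge z : 1 - Cnorm z <= Cnorm (Csub C1 z).
Proof. rewrite <- Cnorm_C1 at 1; apply Cnorm_sub_ge. Qed.

Lemma Cnorm_le_components (x y : R) : Cnorm (x, y) <= Rabs x + Rabs y.
Proof.
  unfold Cnorm; simpl.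
  pose proof (Rabs_pos x); pose proof (Rabs_pos y).
  rewrite <- (sqrt_Rsqr (Rabs x + Rabs y)) by lra.
  apply sqrt_le_1_alt; unfold Rsqr.
  pose proof (Rsqr_abs x); pose proof (Rsqr_abs y); unfold Rsqr in *; nra.
Qed.

Lemma Cnorm_component_le (z : Cplx) : Rabs (fst z) <= Cnorm z /\ Rabs (snd z) <= Cnorm z.
Proof.
  destruct z as [x y]; unfold Cnorm; simpl.
  split; rewrite <- sqrt_Rsqr_abs; apply sqrt_le_1_alt; unfold Rsqr; nra.
Qed.

Lemma RtoC_mul a b : RtoC (a * b) = Cmul (RtoC a) (RtoC b).
Proof. unfold RtoC, Cmul; simpl; f_equal; ring. Qed.

Lemma RtoC_add a b : RtoC (a + b) = Cadd (RtoC a) (RtoC b).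
Proof. unfold RtoC, Cadd; simpl; f_equal; ring. Qed.

Lemma RtoC_inv x : x <> 0 -> RtoC (/ x) = Cinv (RtoC x).
Proof. intro; unfold RtoC, Cinv; simpl; f_equal; field; auto. Qed.

Lemma RtoC_neq0 x : x <> 0 -> RtoC x <> C0.
Proof. intros H E; inversion E; auto. Qed.

Lemma Cpow_add z a b : Cpow z (a + b) = Cmul (Cpow z a) (Cpow z b).
Proof. induction a; simpl; [ring|rewrite IHa; ring]. Qed.

Lemma Cpow_mul z p k : Cpow (Cpow z p) k = Cpow z (p * k).
Proof.
  induction k; simpl; [now rewrite Nat.mul_0_r|].
  rewrite IHk, Nat.mul_succ_r, Nat.add_comm, Cpow_add; ring.
Qed.

Lemma Cpow_RtoC_mul t w n : Cpow (Cmul (RtoC t) w) n = Cmul (RtoC (t ^ n)) (Cpow w n).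
Proof.
  induction n; simpl; [unfold RtoC, C1, Cmul; simpl; f_equal; ring|].
  rewrite IHn, RtoC_mul; ring.
Qed.

(* [Csum_lt u n] = u 0 + ... + u (n - 1), whereas [Csum u n] also includes [u n]. *)
Fixpoint Csum_lt (u : nat -> Cplx) (n : nat) : Cplx :=
  match n with O => C0 | S m => Cadd (Csum_lt u m) (u m) end.

Lemma Csum_lt_ext u v n : (forall i, (i < n)%nat -> u i = v i) -> Csum_lt u n = Csum_lt v n.
Proof.
  induction n; simpl; intro H; auto.
  rewrite IHn by (intros; apply H; lia); rewrite H by lia; auto.
Qed.

Lemma Csum_lt_scale c u n : Csum_lt (fun i => Cmul c (u i)) n = Cmul c (Csum_lt u n).
Proof. induction n; simpl; [ring|rewrite IHn; ring]. Qed.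

Lemma Csum_Csum_lt u n : Csum u n = Csum_lt u (S n).
Proof. induction n; simpl in *; [ring|rewrite IHn; reflexivity]. Qed.

Lemma Csum_lt_geometric x N : Cmul (Csub C1 x) (Csum_lt (Cpow x) N) = Csub C1 (Cpow x N).
Proof.
  induction N; simpl; [ring|].
  transitivity (Cadd (Cmul (Csub C1 x) (Csum_lt (Cpow x) N)) (Cmul (Csub C1 x) (Cpow x N)));
    [ring|].
  rewrite IHN; ring.
Qed.

Lemma Csum_lt_tail (u : nat -> Cplx) M r n k : 0 <= r < 1 ->
  (forall i, Cnorm (u i) <= M * r ^ i) ->
  Cnorm (Csub (Csum_lt u (n + k)) (Csum_lt u n)) <= M * r ^ n / (1 - r).
Proof.
  intros Hr Hu.
  assert (HM : 0 <= M) by (pose proof (Hu O); pose proof (Cnorm_ge0 (u O)); simpl in *; lra).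
  enough (Cnorm (Csub (Csum_lt u (n + k)) (Csum_lt u n)) <= M * (r ^ n - r ^ (n + k)) / (1 - r)).
  { assert (0 <= r ^ (n + k)) by (apply pow_le; lra).
    apply (Rle_trans _ _ _ H); unfold Rdiv; apply Rmult_le_compat_r;
      [apply Rlt_le, Rinv_0_lt_compat; lra | nra]. }
  induction k.
  - rewrite Nat.add_0_r, Rminus_diag; replace (Csub _ _) with C0 by ring.
    rewrite Cnorm_C0; unfold Rdiv; lra.
  - rewrite Nat.add_succ_r; simpl Csum_lt.
    replace (Csub (Cadd (Csum_lt u (n + k)) (u (n + k)%nat)) (Csum_lt u n))
      with (Cadd (Csub (Csum_lt u (n + k)) (Csum_lt u n)) (u (n + k)%nat)) by ring.
    eapply Rle_trans; [apply Cnorm_add|].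
    assert (M * r ^ (n + k) = M * (r ^ (n + k) - r ^ S (n + k)) / (1 - r)) by (simpl; field; lra).
    pose proof (Hu (n + k)%nat).
    replace (M * (r ^ n - r ^ S (n + k)) / (1 - r))
      with (M * (r ^ n - r ^ (n + k)) / (1 - r) + M * (r ^ (n + k) - r ^ S (n + k)) / (1 - r))
      by (field; lra).
    lra.
Qed.

Definition log_term (A : nat -> bool) (z : Cplx) (i : nat) : Cplx :=
  if A (S i) then Cmul (RtoC (/ INR (S i))) (Cpow z (S i)) else C0.

Definition log_sum (A : nat -> bool) (N : nat) (z : Cplx) : Cplx := Csum_lt (log_term A z) N.

Lemma mvt_Cnorm_bound (U V U' V' : R -> R) (B : R) :
  (forall t, 0 <= t <= 1 -> is_derive U t (U' t)) ->
  (forall t, 0 <= t <= 1 -> is_derive V t (V' t)) ->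
  (forall t, 0 <= t <= 1 -> Cnorm (U' t, V' t) <= B) ->
  Cnorm (U 1 - U 0, V 1 - V 0) <= 2 * B.
Proof.
  intros HU HV HB.
  destruct (MVT_abs U U' 0 1) as [c [Hc Hc01]].
  { intros c Hc; rewrite Rmin_left, Rmax_right in Hc by lra; apply is_derive_Reals; auto. }
  destruct (MVT_abs V V' 0 1) as [d [Hd Hd01]].
  { intros d Hd; rewrite Rmin_left, Rmax_right in Hd by lra; apply is_derive_Reals; auto. }
  rewrite Rmin_left, Rmax_right in Hc01, Hd01 by lra.
  rewrite Rminus_0_r, Rabs_R1, Rmult_1_r in Hc, Hd.
  pose proof (proj1 (Cnorm_component_le (U' c, V' c))).
  pose proof (proj2 (Cnorm_component_le (U' d, V' d))).
  pose proof (HB c Hc01); pose proof (HB d Hd01); simpl in *.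
  eapply Rle_trans; [apply Cnorm_le_components|]; lra.
Qed.

Lemma Cnorm_1_sub_scaled w t : Cnorm w < 1 -> 0 <= t <= 1 ->
  1 - Cnorm w <= Cnorm (Csub C1 (Cmul (RtoC t) w)).
Proof.
  intros Hw Ht; pose proof (Cnorm_1_sub_ge (Cmul (RtoC t) w)) as H.
  rewrite Cnorm_mul, Cnorm_RtoC, Rabs_right in H by lra.
  pose proof (Cnorm_ge0 w); nra.
Qed.

(* The derivative in t of Log(1 - t w) + sum_{i<N} (t w)^(i+1)/(i+1). *)
Definition log_remainder (w : Cplx) (N : nat) (t : R) : Cplx :=
  Cmul (Copp w) (Cmul (Cpow (Cmul (RtoC t) w) N) (Cinv (Csub C1 (Cmul (RtoC t) w)))).

Lemma log_remainder_bound w N t : Cnorm w < 1 -> 0 <= t <= 1 ->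
  Cnorm (log_remainder w N t) <= Cnorm w ^ S N / (1 - Cnorm w).
Proof.
  intros Hw Ht; pose proof (Cnorm_ge0 w).
  pose proof (Cnorm_1_sub_scaled w t Hw Ht).
  assert (Csub C1 (Cmul (RtoC t) w) <> C0) by (intro E; rewrite E, Cnorm_C0 in *; lra).
  unfold log_remainder.
  rewrite Cnorm_mul, Cnorm_opp, Cnorm_mul, Cnorm_pow, Cnorm_mul, Cnorm_RtoC, Rabs_right,
    Cnorm_inv by (auto; lra).
  assert (0 <= (t * Cnorm w) ^ N <= Cnorm w ^ N) by (split; [apply pow_le | apply pow_incr]; nra).
  simpl; unfold Rdiv; rewrite Rmult_assoc; apply Rmult_le_compat_l; auto.
  apply Rmult_le_compat; try lra; [apply Rlt_le, Rinv_0_lt_compat; lra|].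
  apply Rinv_le_contravar; lra.
Qed.

Lemma log_remainder_split w N t : Cnorm w < 1 -> 0 <= t <= 1 ->
  Cadd (Cdiv (Copp w) (Csub C1 (Cmul (RtoC t) w)))
       (Csum_lt (fun i => Cmul (RtoC (INR (S i) * t ^ i)) (log_term (fun _ => true) w i)) N)
    = log_remainder w N t.
Proof.
  intros Hw Ht; pose proof (Cnorm_1_sub_scaled w t Hw Ht).
  assert (Hnz : Csub C1 (Cmul (RtoC t) w) <> C0) by (intro E; rewrite E, Cnorm_C0 in *; lra).
  unfold log_remainder; set (x := Cmul (RtoC t) w) in *.
  assert (E : Csum_lt (fun i => Cmul (RtoC (INR (S i) * t ^ i)) (log_term (fun _ => true) w i)) N
              = Cmul w (Csum_lt (Cpow x) N)).
  { rewrite <- Csum_lt_scale; apply Csum_lt_ext; intros i _; unfold x, log_term.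
    assert (INR (S i) <> 0) by (apply not_0_INR; lia).
    rewrite Cpow_RtoC_mul, RtoC_mul, RtoC_inv by auto; simpl Cpow.
    field; apply RtoC_neq0; auto. }
  rewrite E; pose proof (Csum_lt_geometric x N) as G.
  replace (Csum_lt (Cpow x) N) with (Cmul (Csub C1 (Cpow x N)) (Cinv (Csub C1 x)))
    by (rewrite <- G; field; auto).
  field; auto.
Qed.

Lemma is_derive_Csum_lt_monomials (c : nat -> Cplx) N t :
  is_derive (fun t => fst (Csum_lt (fun i => Cmul (RtoC (t ^ S i)) (c i)) N)) t
            (fst (Csum_lt (fun i => Cmul (RtoC (INR (S i) * t ^ i)) (c i)) N)) /\
  is_derive (fun t => snd (Csum_lt (fun i => Cmul (RtoC (t ^ S i)) (c i)) N)) t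
            (snd (Csum_lt (fun i => Cmul (RtoC (INR (S i) * t ^ i)) (c i)) N)).
Proof.
  induction N as [|N [IH1 IH2]]; simpl.
  - split; auto_derive; auto.
  - split.
    + apply (is_derive_plus (fun t => fst (Csum_lt _ N))); auto.
      auto_derive; auto; destruct N; simpl; ring.
    + apply (is_derive_plus (fun t => snd (Csum_lt _ N))); auto.
      auto_derive; auto; destruct N; simpl; ring.
Qed.

Lemma is_derive_ln_norm_1_sub a b t : 0 < 1 - t * a ->
  is_derive (fun t => ln (sqrt ((1 - t * a) ^ 2 + (t * b) ^ 2))) t
    (fst (Cdiv (Copp (a, b)) (Csub C1 (Cmul (RtoC t) (a, b))))).
Proof.
  intro Ha; set (D := (1 - t * a) ^ 2 + (t * b) ^ 2).
  assert (HD : 0 < D) by (unfold D; nra).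
  assert (Hs : sqrt D * sqrt D = D) by (apply sqrt_sqrt; lra).
  assert (0 < sqrt D) by (apply sqrt_lt_R0; lra).
  auto_derive.
  - replace ((1 + - (t * a)) * ((1 + - (t * a)) * 1) + t * b * (t * b * 1)) with D
      by (unfold D; ring).
    repeat split; auto.
  - replace ((1 + - (t * a)) * ((1 + - (t * a)) * 1) + t * b * (t * b * 1)) with D
      by (unfold D; ring).
    unfold Cdiv, Cmul, Cinv, Csub, Cadd, Copp, RtoC, C1; simpl.
    rewrite Rmult_assoc.
    rewrite <- Rinv_mult, (Rmult_assoc 2), Hs.
    replace ((1 + - (t * a - 0 * b)) * (1 + - (t * a - 0 * b))
             + (0 + - (t * b + 0 * a)) * (0 + - (t * b + 0 * a))) with D by (unfold D; ring).
    field_simplify_eq; [unfold D; ring | lra].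
Qed.

Lemma is_derive_atan_1_sub a b t : 0 < 1 - t * a ->
  is_derive (fun t => atan (- (t * b) / (1 - t * a))) t
    (snd (Cdiv (Copp (a, b)) (Csub C1 (Cmul (RtoC t) (a, b))))).
Proof.
  intro Ha; auto_derive; [lra|].
  unfold Cdiv, Cmul, Cinv, Csub, Cadd, Copp, RtoC, C1; simpl.
  field; split; nra.
Qed.

Lemma CLog_1_sub a b : a < 1 ->
  CLog (Csub C1 (a, b)) = (ln (sqrt ((1 - a) ^ 2 + b ^ 2)), atan (- b / (1 - a))).
Proof.
  intro Ha; unfold CLog, Arg, Cnorm; simpl.
  destruct (Rlt_dec 0 (1 + - a)) as [_|]; [|lra].
  f_equal; [do 2 f_equal; ring | f_equal; field; lra].
Qed.

Lemma Log_1_sub_taylor w N : Cnorm w < 1 ->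
  Cnorm (Cadd (CLog (Csub C1 w)) (log_sum (fun _ => true) N w))
    <= 2 * (Cnorm w ^ S N / (1 - Cnorm w)).
Proof.
  intro Hw; destruct (Cnorm_component_le w) as [Ha _].
  set (P := fun t => Csum_lt (fun i => Cmul (RtoC (t ^ S i)) (log_term (fun _ => true) w i)) N).
  assert (P0 : P 0 = C0).
  { unfold P; induction N as [|n IH]; cbn [Csum_lt]; [reflexivity|].
    rewrite IH; simpl; rewrite Rmult_0_l; unfold RtoC, C0, Cmul, Cadd; simpl; f_equal; ring. }
  assert (P1 : P 1 = log_sum (fun _ => true) N w).
  { apply Csum_lt_ext; intros i _; rewrite pow1; change (RtoC 1) with C1; ring. }
  destruct w as [a b]; simpl in Ha.
  assert (Hta : forall t, 0 <= t <= 1 -> 0 < 1 - t * a).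
  { intros t Ht; assert (Ha1 : Rabs a < 1) by lra; apply Rabs_def2 in Ha1 as []; nra. }
  set (U := fun t => ln (sqrt ((1 - t * a) ^ 2 + (t * b) ^ 2)) + fst (P t)).
  set (V := fun t => atan (- (t * b) / (1 - t * a)) + snd (P t)).
  replace (Cadd (CLog (Csub C1 (a, b))) (log_sum (fun _ => true) N (a, b)))
    with (U 1 - U 0, V 1 - V 0).
  2:{ unfold U, V; rewrite P0, P1, CLog_1_sub by (specialize (Hta 1); lra).
      unfold Cadd, C0; cbn [fst snd]; f_equal.
      - replace ((1 - 0 * a) ^ 2 + (0 * b) ^ 2) with 1 by ring.
        rewrite sqrt_1, ln_1, !Rmult_1_l; ring.
      - replace (- (0 * b) / (1 - 0 * a)) with 0 by (field; lra).
        rewrite atan_0, !Rmult_1_l; ring. }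
  apply (mvt_Cnorm_bound U V (fun t => fst (log_remainder (a, b) N t))
                             (fun t => snd (log_remainder (a, b) N t))).
  - intros t Ht; rewrite <- log_remainder_split by auto.
    apply (is_derive_plus (fun t => ln _) (fun t => fst (P t)));
      [apply is_derive_ln_norm_1_sub, Hta, Ht | apply is_derive_Csum_lt_monomials].
  - intros t Ht; rewrite <- log_remainder_split by auto.
    apply (is_derive_plus (fun t => atan _) (fun t => snd (P t)));
      [apply is_derive_atan_1_sub, Hta, Ht | apply is_derive_Csum_lt_monomials].
  - intros t Ht; rewrite <- surjective_pairing; apply log_remainder_bound; auto.
Qed.

Definition log1m_pow (k : nat) (z : Cplx) : Cplx := CLog (Csub C1 (Cpow z k)).

Lemma log1m_pow_bound k z r : (1 <= k)%nat -> 0 <= r < 1 -> Cnorm z <= r ->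
  Cnorm (log1m_pow k z) <= 2 * r ^ k / (1 - r).
Proof.
  intros Hk Hr Hz; unfold log1m_pow; set (w := Cpow z k).
  assert (Hw : Cnorm w <= r ^ k)
    by (unfold w; rewrite Cnorm_pow; apply pow_incr; split; auto; apply Cnorm_ge0).
  assert (r ^ k <= r) by (rewrite <- (pow_1 r) at 2; apply pow_antimono_le_1; lra || lia).
  pose proof (Log_1_sub_taylor w 0 ltac:(lra)) as T.
  replace (Cadd (CLog (Csub C1 w)) (log_sum (fun _ => true) 0 w)) with (CLog (Csub C1 w)) in T
    by (unfold log_sum; simpl; ring).
  eapply Rle_trans; [apply T|]; simpl; rewrite Rmult_1_r.
  pose proof (Cnorm_ge0 w); unfold Rdiv; rewrite <- Rmult_assoc.
  apply Rmult_le_compat; try lra; [apply Rlt_le, Rinv_0_lt_compat; lra|].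
  apply Rinv_le_contravar; lra.
Qed.

Fixpoint sieved (s m : nat) : bool :=
  match s with
  | O => true
  | S s' => sieved s' m && negb (m mod (s' + 2) =? 0)%nat
  end.

Lemma sieved_spec s m :
  sieved s m = true <-> forall d, (2 <= d <= s + 1)%nat -> ~ Nat.divide d m.
Proof.
  induction s as [|s IH]; simpl.
  - split; [intros _ d Hd; lia | auto].
  - rewrite andb_true_iff, IH, negb_true_iff, Nat.eqb_neq; split.
    + intros [H Hs] d Hd Hdm; destruct (Nat.eq_dec d (s + 2)) as [->|].
      * apply Hs, Nat.Lcm0.mod_divide, Hdm.
      * apply (H d); auto; lia.
    + intro H; split.
      * intros d Hd; apply H; lia.
      * intro E; apply (H (s + 2)%nat); [lia | apply Nat.Lcm0.mod_divide, E].
Qed.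

Lemma sieved_1 s : sieved s 1 = true.
Proof. apply sieved_spec; intros d Hd Hdiv; apply Nat.divide_1_r in Hdiv; lia. Qed.

Lemma sieved_small s m : (2 <= m <= s + 1)%nat -> sieved s m = false.
Proof.
  intro Hm; apply not_true_iff_false; rewrite sieved_spec.
  intro H; apply (H m Hm), Nat.divide_refl.
Qed.

Lemma sieved_new_prime s m :
  sieved s (s + 2) = true -> sieved s ((s + 2) * m) = sieved s m.
Proof.
  intro Hp; apply eq_true_iff_eq; rewrite !sieved_spec; rewrite sieved_spec in Hp.
  split; intros H d Hd Hdm; apply (H d Hd).
  - apply Nat.divide_mul_r, Hdm.
  - apply (Nat.gauss _ (s + 2)); auto.
    assert (Hg : (Nat.gcd d (s + 2) <= d)%nat)
      by (apply Nat.divide_pos_le; [lia | apply Nat.gcd_divide_l]).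
    assert (Nat.gcd d (s + 2) <> 0%nat) by (rewrite Nat.gcd_eq_0; lia).
    destruct (Nat.eq_dec (Nat.gcd d (s + 2)) 1) as [|Hn]; auto.
    exfalso; apply (Hp (Nat.gcd d (s + 2))); [lia | apply Nat.gcd_divide_r].
Qed.

Lemma sieved_composite s m : sieved s (s + 2) = false -> sieved (S s) m = sieved s m.
Proof.
  intro Hc; simpl; destruct (sieved s m) eqn:Hm; auto.
  apply negb_true_iff, Nat.eqb_neq; intro E.
  apply not_true_iff_false in Hc; apply Hc, sieved_spec; intros d Hd Hdp.
  rewrite sieved_spec in Hm; apply (Hm d Hd).
  apply (Nat.divide_trans _ (s + 2)); [auto | apply Nat.Lcm0.mod_divide, E].
Qed.

Lemma Nat_div_succ p N : (1 <= p)%nat ->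
  ((S N mod p = 0 /\ S N / p = S (N / p) /\ S N = p * S (N / p))
   \/ (S N mod p <> 0 /\ S N / p = N / p))%nat.
Proof.
  intro Hp; pose proof (Nat.div_mod_eq N p) as E.
  pose proof (Nat.mod_bound_pos N p ltac:(lia) ltac:(lia)).
  set (q := (N / p)%nat) in *; set (r0 := (N mod p)%nat) in *; clearbody q r0.
  destruct (Nat.eq_dec (S r0) p).
  - left; repeat split; [symmetry; apply (Nat.mod_unique _ _ (S q)) |
                          symmetry; apply (Nat.div_unique _ _ _ 0) | ]; lia.
  - right; split; [rewrite <- (Nat.mod_unique _ _ q (S r0)) |
                   symmetry; apply (Nat.div_unique _ _ _ (S r0))]; lia.
Qed.

(* One step of Eratosthenes' sieve on the logarithmic series. *)
Lemma log_sum_sieve (A : nat -> bool) (p : nat) z N : (1 <= p)%nat ->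
  (forall m, A (p * m)%nat = A m) ->
  log_sum (fun m => A m && negb (m mod p =? 0)%nat) N z
    = Csub (log_sum A N z) (Cmul (RtoC (/ INR p)) (log_sum A (N / p) (Cpow z p))).
Proof.
  intros Hp HA; assert (INR p <> 0) by (apply not_0_INR; lia).
  induction N as [|N IH].
  - unfold log_sum; rewrite Nat.Div0.div_0_l; simpl; ring.
  - unfold log_sum in *; cbn [Csum_lt]; rewrite IH.
    replace (log_term (fun m => A m && negb (m mod p =? 0)%nat) z N)
      with (if (S N mod p =? 0)%nat then C0 else log_term A z N)
      by (unfold log_term; destruct (S N mod p =? 0)%nat, (A (S N)); auto).
    destruct (Nat_div_succ p N Hp) as [[Hm [Hq HN]] | [Hm Hq]]; rewrite Hq.
    + rewrite Hm; cbn [Csum_lt Nat.eqb].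
      set (S1 := Csum_lt (log_term A z) N); set (S2 := Csum_lt (log_term A (Cpow z p)) (N / p)).
      unfold log_term; rewrite HN, HA; destruct (A (S (N / p))); [|ring].
      rewrite <- Cpow_mul, mult_INR, RtoC_inv, RtoC_inv, RtoC_inv, RtoC_mul;
        try (apply Rmult_integral_contrapositive; split); try (apply not_0_INR; lia); auto.
      field; split; apply RtoC_neq0; try (apply not_0_INR; lia); auto.
    + apply Nat.eqb_neq in Hm; rewrite Hm; ring.
Qed.

Lemma log_sum_ext A B N z : (forall m, A m = B m) -> log_sum A N z = log_sum B N z.
Proof. intro H; apply Csum_lt_ext; intros i _; unfold log_term; rewrite H; auto. Qed.

Lemma Cnorm_log_term A z i : Cnorm (log_term A z i) <= Cnorm z ^ S i.
Proof.
  pose proof (Cnorm_ge0 z); assert (0 <= Cnorm z ^ S i) by (apply pow_le; lra).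
  unfold log_term; destruct (A (S i)); [|rewrite Cnorm_C0; lra].
  rewrite Cnorm_mul, Cnorm_RtoC, Cnorm_pow.
  pose proof (inv_INR_S_bounds i).
  rewrite Rabs_right by lra; nra.
Qed.

Lemma log_sum_sieved_head s z : log_sum (sieved s) (s + 1) z = z.
Proof.
  enough (forall j, (1 <= j <= s + 1)%nat -> log_sum (sieved s) j z = z) by (apply H; lia).
  induction j as [|j IH]; intro Hj; [lia|].
  unfold log_sum in *; cbn [Csum_lt]; unfold log_term at 2.
  destruct j.
  - rewrite sieved_1; simpl; rewrite Rinv_1; destruct z; unfold RtoC, Cmul, Cadd, C0, C1; simpl.
    f_equal; ring.
  - rewrite IH, sieved_small by lia; ring.
Qed.

Lemma log_sum_sieved_near_id s k z r : 0 <= r < 1 -> Cnorm z <= r ->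
  Cnorm (Csub (log_sum (sieved s) (s + 1 + k) z) z) <= r ^ (s + 2) / (1 - r).
Proof.
  intros Hr Hz; rewrite <- (log_sum_sieved_head s z) at 2.
  replace (r ^ (s + 2)) with (r * r ^ (s + 1))
    by (replace (s + 2)%nat with (S (s + 1)) by lia; reflexivity).
  apply Csum_lt_tail; auto; intro i.
  eapply Rle_trans; [apply Cnorm_log_term|]; simpl; pose proof (Cnorm_ge0 z).
  apply Rmult_le_compat; auto; [apply pow_le; lra | apply pow_incr; lra].
Qed.

Fixpoint lcomb (l : list (Cplx * nat)) (B : nat -> Cplx) : Cplx :=
  match l with
  | [] => C0
  | (c, k) :: l' => Cadd (Cmul c (B k)) (lcomb l' B)
  end.

Lemma lcomb_app l1 l2 B : lcomb (l1 ++ l2) B = Cadd (lcomb l1 B) (lcomb l2 B).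
Proof. induction l1 as [|[c k] l1 IH]; simpl; [ring | rewrite IH; ring]. Qed.

Lemma lcomb_scale c l B :
  lcomb (map (fun ck => (Cmul c (fst ck), snd ck)) l) B = Cmul c (lcomb l B).
Proof. induction l as [|[c' k] l IH]; simpl; [ring | rewrite IH; ring]. Qed.

(* [hnum k z] is (1 - z) h_k(z). *)
Definition hnum (k : nat) (z : Cplx) : Cplx :=
  Csub (Csub (log1m_pow k z) (CLog (Csub C1 z))) (RtoC (ln (INR k))).

Lemma log1m_pow_1 z : log1m_pow 1 z = CLog (Csub C1 z).
Proof. unfold log1m_pow; do 3 f_equal; simpl; ring. Qed.

Lemma log1m_pow_pow k p z : log1m_pow k (Cpow z p) = log1m_pow (p * k) z.
Proof. unfold log1m_pow; rewrite Cpow_mul; reflexivity. Qed.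

Lemma Cnorm_pow_le z p r : (1 <= p)%nat -> Cnorm z <= r -> r <= 1 -> Cnorm (Cpow z p) <= r.
Proof.
  intros Hp Hz Hr1; pose proof (Cnorm_ge0 z); rewrite Cnorm_pow.
  apply (Rle_trans _ (Cnorm z ^ 1)); [apply pow_antimono_le_1; lra || lia | simpl; lra].
Qed.

Lemma pow_eventually_le r d : 0 <= r < 1 -> 0 < d -> exists N, forall n, (N <= n)%nat -> r ^ n <= d.
Proof.
  intros Hr Hd; destruct (pow_lt_1_zero r ltac:(rewrite Rabs_right; lra) d Hd) as [N HN].
  exists N; intros n Hn; specialize (HN n Hn).
  rewrite Rabs_right in HN by (apply Rle_ge, pow_le; lra); lra.
Qed.

Lemma square_summable_bounded (a : nat -> Cplx) s :
  infinite_sum (fun n => Rsqr (Cnorm (a n))) s -> forall n, Cnorm (a n) <= 1 + s.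
Proof.
  intros Hs n; set (u := fun n => Rsqr (Cnorm (a n))).
  assert (Hu : forall m, 0 <= u m) by (intro; apply Rle_0_sqr).
  assert (Hsum : sum_f_R0 u n <= s).
  { apply (growing_ineq (sum_f_R0 u)); auto; intro m; simpl; specialize (Hu (S m)); lra. }
  assert (u n <= sum_f_R0 u n).
  { destruct n as [|m]; simpl; [lra|]; pose proof (cond_pos_sum u m Hu); lra. }
  unfold u, Rsqr in *; pose proof (Cnorm_ge0 (a n)); nra.
Qed.

Lemma power_series_tail (a : nat -> Cplx) (f : Cplx -> Cplx) M r :
  0 <= r < 1 -> (forall n, Cnorm (a n) <= M) ->
  (forall z, in_disk z -> Cseries_cv (fun n => Cmul (a n) (Cpow z n)) (f z)) ->
  forall N z, Cnorm z <= r ->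
  Cnorm (Csub (f z) (Csum (fun n => Cmul (a n) (Cpow z n)) N)) <= M * r ^ S N / (1 - r).
Proof.
  intros Hr HM Hf N z Hz; apply Rle_plus_epsilon; intros eta He.
  destruct (Hf z ltac:(unfold in_disk; lra) eta He) as [N1 HN1].
  specialize (HN1 (N + N1)%nat ltac:(lia)); rewrite Cnorm_sub_sym in HN1.
  eapply Rle_trans;
    [apply (Cnorm_sub_triangle _ (Csum (fun n => Cmul (a n) (Cpow z n)) (N + N1)))|].
  enough (Cnorm (Csub (Csum (fun n => Cmul (a n) (Cpow z n)) (N + N1))
                      (Csum (fun n => Cmul (a n) (Cpow z n)) N)) <= M * r ^ S N / (1 - r)) by lra.
  rewrite !Csum_Csum_lt, <- Nat.add_succ_l; apply Csum_lt_tail; auto.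
  intro i; rewrite Cnorm_mul, Cnorm_pow; pose proof (Cnorm_ge0 z); pose proof (Cnorm_ge0 (a i)).
  apply Rmult_le_compat; auto; [apply pow_le; lra | apply pow_incr; lra].
Qed.

Section Approximation.

Variable r : R.
Hypothesis Hr : 0 <= r < 1.

Definition approximable (F : Cplx -> Cplx) : Prop :=
  forall eps, 0 < eps -> exists l, List.Forall (fun ck => (2 <= snd ck)%nat) l /\
    forall z, Cnorm z <= r -> Cnorm (Csub (lcomb l (fun k => hnum k z)) (F z)) <= eps.

Lemma approximable_hnum k : (2 <= k)%nat -> approximable (hnum k).
Proof.
  intros Hk eps He; exists [(C1, k)]; split; [repeat constructor; auto|].
  intros z _; simpl; replace (Csub _ _) with C0 by ring; rewrite Cnorm_C0; lra.
Qed.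

Lemma approximable_zero : approximable (fun _ => C0).
Proof.
  intros eps He; exists []; split; [constructor|].
  intros z _; simpl; replace (Csub _ _) with C0 by ring; rewrite Cnorm_C0; lra.
Qed.

Lemma approximable_ext F G : approximable F -> (forall z, Cnorm z <= r -> F z = G z) ->
  approximable G.
Proof.
  intros HF E eps He; destruct (HF eps He) as [l [Hl H]]; exists l; split; auto.
  intros z Hz; rewrite <- E by auto; auto.
Qed.

Lemma approximable_add F G : approximable F -> approximable G ->
  approximable (fun z => Cadd (F z) (G z)).
Proof.
  intros HF HG eps He.
  destruct (HF (eps / 2)) as [l1 [Hl1 H1]]; [lra|].
  destruct (HG (eps / 2)) as [l2 [Hl2 H2]]; [lra|].
  exists (l1 ++ l2); split; [apply List.Forall_app; auto|].
  intros z Hz; rewrite lcomb_app.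
  replace (Csub (Cadd (lcomb l1 _) (lcomb l2 _)) (Cadd (F z) (G z)))
    with (Cadd (Csub (lcomb l1 (fun k => hnum k z)) (F z))
               (Csub (lcomb l2 (fun k => hnum k z)) (G z))) by ring.
  eapply Rle_trans; [apply Cnorm_add|]; specialize (H1 z Hz); specialize (H2 z Hz); lra.
Qed.

Lemma approximable_scale c F : approximable F -> approximable (fun z => Cmul c (F z)).
Proof.
  intros HF eps He; pose proof (Cnorm_ge0 c).
  destruct (HF (eps / (Cnorm c + 1))) as [l [Hl Hlc]]; [apply Rdiv_lt_0_compat; lra|].
  exists (map (fun ck => (Cmul c (fst ck), snd ck)) l); split.
  { apply List.Forall_map; exact Hl. }
  intros z Hz; rewrite lcomb_scale.
  replace (Csub (Cmul c _) (Cmul c (F z)))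
    with (Cmul c (Csub (lcomb l (fun k => hnum k z)) (F z))) by ring.
  rewrite Cnorm_mul; specialize (Hlc z Hz).
  pose proof (Cnorm_ge0 (Csub (lcomb l (fun k => hnum k z)) (F z))).
  apply (Rle_trans _ (Cnorm c * (eps / (Cnorm c + 1)))); [apply Rmult_le_compat_l; lra|].
  apply (Rmult_le_reg_r (Cnorm c + 1)); [lra|].
  unfold Rdiv; rewrite Rmult_assoc, Rmult_assoc, Rinv_l by lra; nra.
Qed.

Lemma approximable_lim F :
  (forall eps, 0 < eps -> exists G, approximable G /\
     forall z, Cnorm z <= r -> Cnorm (Csub (G z) (F z)) <= eps) ->
  approximable F.
Proof.
  intros H eps He; destruct (H (eps / 2)) as [G [HG HGF]]; [lra|].
  destruct (HG (eps / 2)) as [l [Hl HlG]]; [lra|]; exists l; split; auto.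
  intros z Hz; eapply Rle_trans; [apply (Cnorm_sub_triangle _ (G z))|].
  specialize (HlG z Hz); specialize (HGF z Hz); lra.
Qed.

Lemma approximable_lcomb l (B : nat -> Cplx -> Cplx) :
  List.Forall (fun ck => approximable (B (snd ck))) l ->
  approximable (fun z => lcomb l (fun k => B k z)).
Proof.
  induction l as [|[c k] l IH]; intro Hl; [apply approximable_zero|].
  inversion Hl; subst; apply approximable_add; auto; apply approximable_scale; auto.
Qed.

Lemma approximable_sub F G : approximable F -> approximable G ->
  approximable (fun z => Csub (F z) (G z)).
Proof.
  intros HF HG; eapply approximable_ext.
  - apply (approximable_add _ _ HF (approximable_scale (Copp C1) _ HG)).
  - intros z _; simpl; ring.
Qed.

Lemma ln2_pos : 0 < ln 2.
Proof. rewrite <- ln_1; apply ln_increasing; lra. Qed.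

(* hnum K - hnum (2K) = log1m_pow K - log1m_pow (2K) + ln 2, and log1m_pow K -> 0. *)
Lemma approximable_one : approximable (fun _ => C1).
Proof.
  apply approximable_lim; intros eps He; pose proof ln2_pos.
  destruct (pow_eventually_le r (eps * ln 2 * (1 - r) / 4) Hr) as [K0 HK];
    [apply Rdiv_lt_0_compat; [repeat apply Rmult_lt_0_compat|]; lra|].
  set (K := (K0 + 2)%nat); set (c := RtoC (/ ln 2)).
  exists (fun z => Cmul c (Csub (hnum K z) (hnum (2 * K) z))); split.
  { apply approximable_scale, approximable_sub; apply approximable_hnum; unfold K; lia. }
  intros z Hz.
  replace (Csub (Cmul c (Csub (hnum K z) (hnum (2 * K) z))) C1)
    with (Cmul c (Csub (log1m_pow K z) (log1m_pow (2 * K) z))).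
  2:{ assert (E : ln (INR (2 * K)) = ln 2 + ln (INR K)).
      { rewrite mult_INR, ln_mult;
          [f_equal; simpl; lra | simpl; lra | apply lt_0_INR; unfold K; lia]. }
      unfold hnum, c; rewrite E, RtoC_add, RtoC_inv by lra.
      field; apply RtoC_neq0; lra. }
  rewrite Cnorm_mul; unfold c; rewrite Cnorm_RtoC, Rabs_right
    by (apply Rle_ge, Rlt_le, Rinv_0_lt_compat; lra).
  pose proof (log1m_pow_bound K z r ltac:(unfold K; lia) Hr Hz).
  pose proof (log1m_pow_bound (2 * K) z r ltac:(unfold K; lia) Hr Hz).
  pose proof (Cnorm_sub (log1m_pow K z) (log1m_pow (2 * K) z)).
  assert (r ^ (2 * K) <= r ^ K) by (apply pow_antimono_le_1; lra || lia).
  assert (r ^ K <= eps * ln 2 * (1 - r) / 4) by (apply HK; unfold K; lia).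
  assert (Cnorm (Csub (log1m_pow K z) (log1m_pow (2 * K) z)) <= eps * ln 2).
  { apply (Rle_trans _ (4 * r ^ K / (1 - r))).
    - unfold Rdiv in *; assert (0 < / (1 - r)) by (apply Rinv_0_lt_compat; lra); nra.
    - apply (Rmult_le_reg_r (1 - r)); [lra|]; unfold Rdiv in *.
      rewrite Rmult_assoc, Rinv_l by lra; lra. }
  apply (Rmult_le_reg_l (ln 2)); [lra|]; rewrite <- Rmult_assoc, Rinv_r by lra; lra.
Qed.

Lemma approximable_const c : approximable (fun _ => c).
Proof.
  eapply approximable_ext; [apply (approximable_scale c _ approximable_one)|].
  intros; simpl; ring.
Qed.

Lemma approximable_Log_1_sub : approximable (fun z => CLog (Csub C1 z)).
Proof.
  apply approximable_lim; intros eps He.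
  destruct (pow_eventually_le r (eps * (1 - r) / 2) Hr) as [K0 HK]; [apply Rdiv_lt_0_compat; nra|].
  set (K := (K0 + 2)%nat).
  exists (fun z => Csub (Copp (hnum K z)) (RtoC (ln (INR K)))); split.
  { apply approximable_sub; [|apply approximable_const].
    eapply approximable_ext;
      [apply (approximable_scale (Copp C1) (hnum K)), approximable_hnum; unfold K; lia|].
    intros z _; simpl; ring. }
  intros z Hz.
  replace (Csub _ (CLog (Csub C1 z))) with (Copp (log1m_pow K z)) by (unfold hnum; ring).
  rewrite Cnorm_opp; pose proof (log1m_pow_bound K z r ltac:(unfold K; lia) Hr Hz).
  assert (r ^ K <= eps * (1 - r) / 2) by (apply HK; unfold K; lia).
  apply (Rle_trans _ _ _ H); apply (Rmult_le_reg_r (1 - r)); [lra|]; unfold Rdiv in *.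
  rewrite Rmult_assoc, Rinv_l by lra; lra.
Qed.

Lemma approximable_log1m_pow k : (1 <= k)%nat -> approximable (log1m_pow k).
Proof.
  intro Hk; destruct (Nat.eq_dec k 1) as [->|Hk2].
  - eapply approximable_ext; [apply approximable_Log_1_sub|].
    intros z _; symmetry; apply log1m_pow_1.
  - apply (approximable_ext
             (fun z => Cadd (hnum k z) (Cadd (CLog (Csub C1 z)) (RtoC (ln (INR k)))))).
    + apply approximable_add; [apply approximable_hnum; lia|].
      apply approximable_add; [apply approximable_Log_1_sub | apply approximable_const].
    + intros z _; unfold hnum; ring.
Qed.

Lemma approximable_comp_pow F p : (1 <= p)%nat -> approximable F ->
  approximable (fun z => F (Cpow z p)).
Proof.
  intros Hp HF; apply approximable_lim; intros eps He.
  destruct (HF eps He) as [l [Hl HlF]].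
  exists (fun z => lcomb l (fun k => hnum k (Cpow z p))); split.
  - apply approximable_lcomb, (List.Forall_impl _ (P := fun ck => (2 <= snd ck)%nat)); auto.
    intros [c k] Hk; simpl in *.
    apply (approximable_ext
             (fun z => Csub (Csub (log1m_pow (p * k) z) (log1m_pow p z)) (RtoC (ln (INR k))))).
    + apply approximable_sub; [apply approximable_sub|apply approximable_const];
        apply approximable_log1m_pow; [nia | exact Hp].
    + intros z _; unfold hnum; rewrite log1m_pow_pow; reflexivity.
  - intros z Hz; apply HlF, Cnorm_pow_le; auto; lra.
Qed.

Definition approximable_log_series (A : nat -> bool) : Prop :=
  exists F, approximable F /\ exists C, 0 <= C /\
    forall N z, Cnorm z <= r -> Cnorm (Csub (F z) (log_sum A N z)) <= C * Cnorm z ^ S N.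

Lemma approximable_log_series_full : approximable_log_series (fun _ => true).
Proof.
  exists (fun z => Copp (CLog (Csub C1 z))); split.
  { eapply approximable_ext; [apply (approximable_scale (Copp C1) _ approximable_Log_1_sub)|].
    intros; simpl; ring. }
  exists (2 / (1 - r)); split; [apply Rlt_le, Rdiv_lt_0_compat; lra|].
  intros N z Hz; pose proof (Cnorm_ge0 z).
  replace (Csub _ _) with (Copp (Cadd (CLog (Csub C1 z)) (log_sum (fun _ => true) N z)))
    by ring.
  rewrite Cnorm_opp; eapply Rle_trans; [apply Log_1_sub_taylor; lra|].
  assert (0 <= Cnorm z ^ S N) by (apply pow_le; lra).
  assert (/ (1 - Cnorm z) <= / (1 - r)) by (apply Rinv_le_contravar; lra).
  unfold Rdiv; nra.
Qed.

Lemma approximable_log_series_sieve A p : (1 <= p)%nat -> (forall m, A (p * m)%nat = A m) ->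
  approximable_log_series A ->
  approximable_log_series (fun m => A m && negb (m mod p =? 0)%nat).
Proof.
  intros Hp HA [F [HF [C [HC0 HC]]]].
  assert (Hp1 : 1 <= INR p) by (apply (le_INR 1); lia).
  assert (Hip : 0 <= / INR p <= 1)
    by (split; [apply Rlt_le, Rinv_0_lt_compat | rewrite <- Rinv_1; apply Rinv_le_contravar]; lra).
  exists (fun z => Csub (F z) (Cmul (RtoC (/ INR p)) (F (Cpow z p)))); split.
  { apply approximable_sub, approximable_scale, approximable_comp_pow; auto. }
  exists (2 * C); split; [lra|]; intros N z Hz.
  rewrite log_sum_sieve by auto.
  replace (Csub (Csub (F z) _) _)
    with (Cadd (Csub (F z) (log_sum A N z))
               (Cmul (Copp (RtoC (/ INR p))) (Csub (F (Cpow z p)) (log_sum A (N / p) (Cpow z p)))))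
    by ring.
  eapply Rle_trans; [apply Cnorm_add|].
  rewrite Cnorm_mul, Cnorm_opp, Cnorm_RtoC, Rabs_right by lra.
  pose proof (Cnorm_ge0 z); pose proof (HC N z Hz).
  pose proof (HC (N / p)%nat (Cpow z p) ltac:(apply Cnorm_pow_le; auto; lra)) as HCp.
  rewrite Cnorm_pow, <- pow_mult in HCp.
  assert (Cnorm z ^ (p * S (N / p)) <= Cnorm z ^ S N).
  { apply pow_antimono_le_1; [lra|].
    pose proof (Nat.div_mod_eq N p); pose proof (Nat.mod_bound_pos N p ltac:(lia) ltac:(lia)).
    nia. }
  pose proof (Cnorm_ge0 (Csub (F (Cpow z p)) (log_sum A (N / p) (Cpow z p)))).
  nra.
Qed.

Lemma approximable_log_series_sieved s : approximable_log_series (sieved s).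
Proof.
  induction s as [|s IH]; [apply approximable_log_series_full|].
  destruct (sieved s (s + 2)) eqn:Hprime.
  - apply approximable_log_series_sieve; auto; [lia|].
    intro m; apply sieved_new_prime, Hprime.
  - destruct IH as [F [HF [C [HC0 HC]]]]; exists F; split; auto; exists C; split; auto.
    intros N z Hz; rewrite (log_sum_ext _ (sieved s)) by (intro m; apply sieved_composite; auto).
    apply HC, Hz.
Qed.


Lemma approximable_id : approximable (fun z => z).
Proof.
  apply approximable_lim; intros eps He.
  destruct (pow_eventually_le r (eps / 2 * (1 - r)) Hr) as [s Hs]; [apply Rmult_lt_0_compat; lra|].
  destruct (approximable_log_series_sieved s) as [F [HF [C [HC0 HC]]]].
  destruct (pow_eventually_le r (eps / 2 / (C + 1)) Hr) as [N0 HN0]; [apply Rdiv_lt_0_compat; lra|].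
  exists F; split; auto; intros z Hz; set (N := (s + 1 + N0)%nat).
  eapply Rle_trans; [apply (Cnorm_sub_triangle _ (log_sum (sieved s) N z))|].
  pose proof (HC N z Hz) as HFN.
  pose proof (log_sum_sieved_near_id s N0 z r Hr Hz) as HNz; fold N in HNz.
  assert (r ^ (s + 2) <= eps / 2 * (1 - r)) by (apply Hs; lia).
  assert (r ^ (s + 2) / (1 - r) <= eps / 2).
  { apply (Rmult_le_reg_r (1 - r)); [lra|]; unfold Rdiv; rewrite Rmult_assoc, Rinv_l by lra; lra. }
  assert (C * Cnorm z ^ S N <= eps / 2).
  { assert (Cnorm z ^ S N <= eps / 2 / (C + 1)).
    { apply (Rle_trans _ (r ^ S N)); [apply pow_incr; pose proof (Cnorm_ge0 z); lra|].
      apply HN0; unfold N; lia. }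
    assert (0 <= Cnorm z ^ S N) by (apply pow_le, Cnorm_ge0).
    apply (Rle_trans _ (C * (eps / 2 / (C + 1)))); [apply Rmult_le_compat_l; lra|].
    replace (C * (eps / 2 / (C + 1))) with (eps / 2 - eps / 2 / (C + 1)) by (field; lra).
    assert (0 < eps / 2 / (C + 1)) by (apply Rdiv_lt_0_compat; lra); lra. }
  lra.
Qed.

Lemma approximable_pow m : approximable (fun z => Cpow z m).
Proof.
  destruct m as [|m]; [apply (approximable_ext _ _ approximable_one); reflexivity|].
  apply (approximable_comp_pow (fun z => z)); [lia | apply approximable_id].
Qed.

Lemma approximable_Csum (u : nat -> Cplx -> Cplx) N : (forall n, approximable (u n)) ->
  approximable (fun z => Csum (fun n => u n z) N).
Proof. intro Hu; induction N; simpl; [apply Hu | apply approximable_add; auto]. Qed.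

Lemma approximable_1_sub_mul_poly (a : nat -> Cplx) N :
  approximable (fun z => Cmul (Csub C1 z) (Csum (fun n => Cmul (a n) (Cpow z n)) N)).
Proof.
  apply (approximable_ext
           (fun z => Csum (fun n => Csub (Cmul (a n) (Cpow z n)) (Cmul (a n) (Cpow z (S n)))) N)).
  - apply approximable_Csum; intro n.
    apply approximable_sub; apply approximable_scale, approximable_pow.
  - intros z _; rewrite !Csum_Csum_lt, <- Csum_lt_scale.
    apply Csum_lt_ext; intros; simpl; ring.
Qed.

Lemma approximable_1_sub_mul_series (a : nat -> Cplx) M (f : Cplx -> Cplx) :
  (forall n, Cnorm (a n) <= M) ->
  (forall z, in_disk z -> Cseries_cv (fun n => Cmul (a n) (Cpow z n)) (f z)) ->
  approximable (fun z => Cmul (Csub C1 z) (f z)).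
Proof.
  intros HM Hf.
  assert (HM0 : 0 <= M) by (pose proof (HM O); pose proof (Cnorm_ge0 (a O)); lra).
  apply approximable_lim; intros eps He.
  destruct (pow_eventually_le r (eps * (1 - r) / (2 * (M + 1))) Hr) as [N HN];
    [apply Rdiv_lt_0_compat; nra|].
  exists (fun z => Cmul (Csub C1 z) (Csum (fun n => Cmul (a n) (Cpow z n)) N)); split;
    [apply approximable_1_sub_mul_poly|].
  intros z Hz; set (P := Csum (fun n => Cmul (a n) (Cpow z n)) N).
  replace (Csub (Cmul (Csub C1 z) P) (Cmul (Csub C1 z) (f z)))
    with (Cmul (Csub C1 z) (Copp (Csub (f z) P))) by ring.
  rewrite Cnorm_mul, Cnorm_opp.
  pose proof (power_series_tail a f M r Hr HM Hf N z Hz) as Htail; fold P in Htail.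
  pose proof (Cnorm_sub C1 z); rewrite Cnorm_C1 in *.
  pose proof (Cnorm_ge0 (Csub C1 z)); pose proof (Cnorm_ge0 (Csub (f z) P)).
  assert (r ^ S N <= eps * (1 - r) / (2 * (M + 1))) by (apply HN; lia).
  assert (0 <= r ^ S N) by (apply pow_le; lra).
  assert (M * r ^ S N / (1 - r) <= eps / 2).
  { apply (Rmult_le_reg_r (1 - r)); [lra|]; unfold Rdiv in *.
    rewrite Rmult_assoc, Rinv_l by lra.
    assert (r ^ S N * (2 * (M + 1)) <= eps * (1 - r)).
    { apply (Rmult_le_reg_r (/ (2 * (M + 1)))); [apply Rinv_0_lt_compat; lra|].
      rewrite Rmult_assoc, Rinv_r by lra; lra. }
    nra. }
  nra.
Qed.

End Approximation.

Lemma inv_INR_small d : 0 < d -> exists N : nat, forall n, (N <= n)%nat -> / INR (S n) < d.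
Proof.
  intro Hd; destruct (archimed (/ d)) as [H1 _].
  assert (0 < / d) by (apply Rinv_0_lt_compat; auto).
  exists (Z.to_nat (up (/ d))); intros n Hn.
  assert (INR (Z.to_nat (up (/ d))) = IZR (up (/ d)))
    by (rewrite INR_IZR_INZ, Z2Nat.id; auto; apply le_IZR; lra).
  assert (INR (Z.to_nat (up (/ d))) <= INR n) by (apply le_INR; auto).
  rewrite S_INR, <- (Rinv_inv d); apply Rinv_lt_contravar; [apply Rmult_lt_0_compat|]; lra.
Qed.

Lemma subsequence_index_ge (phi : nat -> nat) :
  (forall n, (phi n < phi (S n))%nat) -> forall n, (n <= phi n)%nat.
Proof. intros H n; induction n; [lia | specialize (H n); lia]. Qed.

Lemma compact_in_closed_subdisk (K : Cplx -> Prop) :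
  (forall z, K z -> in_disk z) -> seq_compact K ->
  exists r, 0 <= r < 1 /\ forall z, K z -> Cnorm z <= r.
Proof.
  intros HK Hc; apply NNPP; intro Hno.
  assert (Hex : forall n : nat, exists z, K z /\ 1 - / INR (S n) < Cnorm z).
  { intro n; apply NNPP; intro Hn; apply Hno; exists (1 - / INR (S n)).
    pose proof (inv_INR_S_bounds n).
    split; [lra|]; intros z Hz; apply Rnot_lt_le; intro; apply Hn; exists z; auto. }
  destruct (choice _ Hex) as [u Hu].
  destruct (Hc u (fun n => proj1 (Hu n))) as [phi [Hphi [l [Kl Hl]]]].
  pose proof (HK l Kl) as Hl1; unfold in_disk in Hl1.
  destruct (inv_INR_small ((1 - Cnorm l) / 2)) as [N1 HN1]; [lra|].
  destruct (Hl ((1 - Cnorm l) / 2)) as [N2 HN2]; [lra|].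
  specialize (HN2 (N1 + N2)%nat ltac:(lia)).
  pose proof (subsequence_index_ge phi Hphi (N1 + N2)).
  specialize (HN1 (phi (N1 + N2)%nat) ltac:(lia)).
  pose proof (proj2 (Hu (phi (N1 + N2)%nat))).
  pose proof (Cnorm_sub_ge (u (phi (N1 + N2)%nat)) l); lra.
Qed.

Lemma lcomb_div l B d : lcomb l (fun k => Cdiv (B k) d) = Cdiv (lcomb l B) d.
Proof. induction l as [|[c k] l IH]; simpl; unfold Cdiv in *; [ring | rewrite IH; ring]. Qed.

Lemma H2_approx_by_h f r eps : in_H2 f -> 0 <= r < 1 -> 0 < eps ->
  exists l, List.Forall (fun ck => (2 <= snd ck)%nat) l /\
    forall z, Cnorm z <= r -> Cnorm (Csub (lcomb l (fun k => h k z)) (f z)) <= eps.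
Proof.
  intros [a [[s Hs] Hf]] Hr He.
  destruct (approximable_1_sub_mul_series r Hr a (1 + s) f (square_summable_bounded a s Hs) Hf
              (eps * (1 - r))) as [l [Hl Hlz]];
    [apply Rmult_lt_0_compat; lra|].
  exists l; split; auto; intros z Hz; specialize (Hlz z Hz).
  assert (HD : 1 - r <= Cnorm (Csub C1 z)) by (pose proof (Cnorm_1_sub_ge z); lra).
  assert (Csub C1 z <> C0) by (intro E; rewrite E, Cnorm_C0 in HD; lra).
  change (lcomb l (fun k => h k z)) with (lcomb l (fun k => Cdiv (hnum k z) (Csub C1 z))).
  rewrite lcomb_div.
  replace (Csub _ (f z))
    with (Cmul (Csub (lcomb l (fun k => hnum k z)) (Cmul (Csub C1 z) (f z))) (Cinv (Csub C1 z)))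
    by (field; auto).
  rewrite Cnorm_mul, Cnorm_inv by auto.
  apply (Rle_trans _ (eps * (1 - r) * / (1 - r))); [|right; field; lra].
  apply Rmult_le_compat; auto using Cnorm_ge0; [apply Rlt_le, Rinv_0_lt_compat; lra|].
  apply Rinv_le_contravar; lra.
Qed.

Fixpoint lcoeff (l : list (Cplx * nat)) (k : nat) : Cplx :=
  match l with
  | [] => C0
  | (c, j) :: l' => Cadd (if Nat.eqb j k then c else C0) (lcoeff l' k)
  end.

Fixpoint lmax (l : list (Cplx * nat)) : nat :=
  match l with [] => O | (_, j) :: l' => Nat.max j (lmax l') end.

Lemma Csum_ext u v n : (forall i, u i = v i) -> Csum u n = Csum v n.
Proof. intro H; rewrite !Csum_Csum_lt; apply Csum_lt_ext; auto. Qed.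

Lemma Csum_add u v n : Csum (fun i => Cadd (u i) (v i)) n = Cadd (Csum u n) (Csum v n).
Proof. induction n; simpl; [|rewrite IHn]; ring. Qed.

Lemma Csum_indicator (B : nat -> Cplx) k c n : (2 <= k <= n + 2)%nat ->
  Csum (fun i => Cmul (if Nat.eqb k (i + 2) then c else C0) (B (i + 2)%nat)) n = Cmul c (B k).
Proof.
  assert (Hzero : forall m, (m + 2 < k)%nat ->
    Csum (fun i => Cmul (if Nat.eqb k (i + 2) then c else C0) (B (i + 2)%nat)) m = C0).
  { induction m; intro Hm; cbn [Csum];
      [|rewrite IHm by lia]; rewrite (proj2 (Nat.eqb_neq _ _)) by lia; ring. }
  induction n; intro Hk; cbn [Csum].
  - replace k with 2%nat by lia; rewrite Nat.eqb_refl; reflexivity.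
  - destruct (Nat.eq_dec k (S n + 2)) as [->|Hne].
    + rewrite Hzero, Nat.eqb_refl by lia; ring.
    + rewrite IHn, (proj2 (Nat.eqb_neq _ _)) by lia; ring.
Qed.

Lemma Csum_lcoeff l (B : nat -> Cplx) n :
  List.Forall (fun ck => (2 <= snd ck)%nat) l -> (lmax l <= n + 2)%nat ->
  Csum (fun i => Cmul (lcoeff l (i + 2)) (B (i + 2)%nat)) n = lcomb l B.
Proof.
  induction l as [|[c k] l IH]; intros Hl Hn; simpl in *.
  - induction n; simpl; [ring | rewrite IHn by lia; ring].
  - inversion Hl; subst; simpl in *.
    rewrite (Csum_ext _ (fun i => Cadd (Cmul (if Nat.eqb k (i + 2) then c else C0) (B (i + 2)%nat))
                                        (Cmul (lcoeff l (i + 2)) (B (i + 2)%nat))))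
      by (intro; ring).
    rewrite Csum_add, Csum_indicator, IH by (auto; lia); reflexivity.
Qed.

Theorem mainTheorem10 :
  forall f : Cplx -> Cplx, in_H2 f ->
    exists (n : nat -> nat) (c : nat -> nat -> Cplx),
      cv_compact_open
        (fun j z => Csum (fun i => Cmul (c j (i + 2)%nat) (h (i + 2)%nat z)) (n j))
        f.
Proof.
  intros f Hf.
  assert (Happrox : forall j : nat, exists l, List.Forall (fun ck => (2 <= snd ck)%nat) l /\
    forall z, Cnorm z <= 1 - / INR (S j) ->
      Cnorm (Csub (lcomb l (fun k => h k z)) (f z)) <= / INR (S j)).
  { intro j; pose proof (inv_INR_S_bounds j); apply H2_approx_by_h; auto; lra. }
  destruct (choice _ Happrox) as [l Hl].
  exists (fun j => lmax (l j)), (fun j => lcoeff (l j)).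
  intros K HK HKc eps Heps.
  destruct (compact_in_closed_subdisk K HK HKc) as [r [Hr HKr]].
  destruct (inv_INR_small (Rmin eps (1 - r))) as [N HN]; [apply Rmin_pos; lra|].
  exists N; intros j Hj z Kz; destruct (Hl j) as [Hl2 Hlz].
  cbv beta; rewrite (Csum_lcoeff (l j) (fun k => h k z)) by (auto; lia).
  specialize (HN j Hj); pose proof (Rmin_l eps (1 - r)); pose proof (Rmin_r eps (1 - r)).
  pose proof (HKr z Kz); specialize (Hlz z ltac:(lra)); lra.
Qed.
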